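(* Let $r\ge 1$ and let $\Gamma$ be a $(d-1)$-dimensional simplicial complex. (1) If $\mathrm{gr}_1(\Gamma)>2r$, then for any two vertices $u,v$ there are at most $(d-1)^{r-1}$ non-returning walks of length $r$ from $u$ to $v$. (2) If $\mathrm{gr}_1(\Gamma)>2r+1$ and $\{u,v\}$ is an edge, then any non-returning walk of length $r+1$ whose first step is $(u,v)$ and any non-returning walk of length $r+1$ whose first step is $(v,u)$ have different final vertices.
   Context: A simplicial complex $\Gamma$ on a finite vertex set $V=V(\Gamma)$ is a family of subsets of $V$ (faces) closed under taking subsets; its dimension is $\max\{|F|:F\in\Gamma\}-1$. A non-returning walk of length $k$ from $v_0$ to $v_k$ is a sequence of vertices $(v_0,v_1,\dots,v_k)$ (viewed as the sequence of directed edges $\vec{v_0v_1},\dots,\vec{v_{k-1}v_k}$) such that each $\{v_j,v_{j+1}\}$ is an edge of $\Gamma$ and, for all $0\le j\le k-2$, $v_j\neq v_{j+2}$ and $\{v_j,v_{j+1},v_{j+2}\}\notin\Gamma$; its first step is $(v_0,v_1)$. For $W\subseteq V$, $\Gamma[W]=\{F\in\Gamma:F\subseteq W\}$; for a face $F$ (possibly empty), $\mathrm{lk}_\Gamma(F)=\{G\setminus F: F\subseteq G\in\Gamma\}$. Fix a field $\mathbf{k}$; $\tilde H_i(\cdot;\mathbf{k})$ is reduced simplicial homology. The $1$-girth is $\mathrm{gr}_{1}(\Gamma)=\min\{|W|: W\subseteq V(\Gamma),\ \tilde H_{1}(\mathrm{lk}_\Gamma(F)[W];\mathbf{k})\neq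 0 \text{ for some face } F\in\Gamma \text{ (including } F=\emptyset)\}$, or $\infty$ if none exists. *)

From HB Require Import structures.
From mathcomp Require Import all_boot all_order all_algebra.
Set Implicit Arguments. Unset Strict Implicit. Unset Printing Implicit Defensive.
Import GRing.Theory.

Section Defs.
Variable V : finType.

Definition is_simplicial_complex (G : {set {set V}}) : Prop :=
  forall F H : {set V}, F \in G -> H \subset F -> H \in G.

Definition has_dim_minus1 (G : {set {set V}}) (d : nat) : Prop :=
  (exists2 F, F \in G & #|F| = d) /\ (forall F, F \in G -> #|F| <= d).

Definition induced (G : {set {set V}}) (W : {set V}) : {set {set V}} :=
  [set F in G | F \subset W].

Definition link (G : {set {set V}}) (F : {set V}) : {set {set V}} :=
  [set H :\: F | H in G & F \subset H].

Section Homology.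
Variable K : fieldType.

(* Vertices are totally ordered by enum_rank; oriented simplices are
   listed increasingly. Coefficient of the face T in the boundary of S:
   (-1)^i when S = T u {x} and x is the i-th smallest element of S. *)
Definition bd_coef (S T : {set V}) : K :=
  (if (T \subset S) && (#|S :\: T| == 1)%N then
    (-1) ^+ (\sum_(x in S :\: T) #|[set w in T | enum_rank w < enum_rank x]|)%N
  else 0)%R.

Definition bd (c : {set V} -> K) (T : {set V}) : K :=
  (\sum_(S : {set V}) c S * bd_coef S T)%R.

Definition is_chain (D : {set {set V}}) (i : nat) (c : {set V} -> K) : Prop :=
  forall S, c S != 0%R -> S \in D /\ #|S| = i.+1.

Definition H1_nonzero (D : {set {set V}}) : Prop :=
  exists z : {set V} -> K,
    [/\ is_chain D 1 z, (forall T, bd z T = 0%R) &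
        ~ exists c : {set V} -> K, is_chain D 2 c /\ forall T, bd c T = z T].

(* gr_1(G) > m  (with gr_1 = infinity allowed): every W witnessing
   nonvanishing H~_1 of some induced link has more than m elements. *)
Definition gr1_gt (G : {set {set V}}) (m : nat) : Prop :=
  forall (W F : {set V}), F \in G -> H1_nonzero (induced (link G F) W) ->
    (m < #|W|)%N.
End Homology.

Definition nrwalk (G : {set {set V}}) (k : nat) (w : k.+1.-tuple V) : bool :=
  [forall j : 'I_k,
     (tnth w (inord j) != tnth w (inord j.+1)) &&
     ([set tnth w (inord j); tnth w (inord j.+1)] \in G)] &&
  [forall j : 'I_k, (j.+1 < k)%N ==>
     ((tnth w (inord j) != tnth w (inord j.+2)) &&
      ([set tnth w (inord j); tnth w (inord j.+1); tnth w (inord j.+2)] \notin G))].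

End Defs.

(** A set W supporting a nonzero class of H~_1 in an induced link witnesses
    gr_1 <= #|W|.  Two witnesses suffice: the boundary of a missing triangle
    in a link (#|W| = 3) and an induced cycle of length at least 4 in the
    complex itself; in both the cycle of edges carries a 1-cycle that cannot
    bound, as there are no 2-faces.  As gr_1 > 3, the first witness makes the
    complex flag, so along a non-returning walk the vertices v_j and v_(j+2)
    are never adjacent.  A closed non-returning walk of length L then yields,
    from a chord of minimal span, an induced cycle with at most L vertices,
    so L >= gr_1.  For (2), reversing one walk and continuing along the other
    closes them up into such a walk of length 2r+1.  For (1), the penultimate
    vertices of the walks of length r from u to v are pairwise adjacent (two
    walks through non-adjacent ones close up into a walk of length 2r) and
    adjacent to v; together with v they form a face, so there are at most
    d-1 of them, and induction on r gives the bound (d-1)^(r-1). *)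

From HB Require Import structures.
From mathcomp Require Import all_boot all_order all_algebra zify.
Set Implicit Arguments. Unset Strict Implicit. Unset Printing Implicit Defensive.
Import GRing.Theory.

Section EdgeCycles.
Variables (K : fieldType) (V : finType).

Lemma bd_coef_setU1 (x : V) (T : {set V}) : x \notin T ->
  bd_coef K (x |: T) T = ((-1) ^+ #|[set w in T | (enum_rank w < enum_rank x)%N]|)%R.
Proof.
move=> xT; rewrite /bd_coef subsetUr.
have -> : (x |: T) :\: T = [set x].
  by apply/setP=> t; rewrite !inE; case: eqP => [->|_]; [rewrite xT | case: (t \in T)].
by rewrite cards1 big_set1.
Qed.

Lemma bd_coef_set2 (x y : V) (T : {set V}) : x != y ->
  bd_coef K [set x; y] T =
  (if T == [set y] then (-1) ^+ (enum_rank y < enum_rank x)%N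
   else if T == [set x] then (-1) ^+ (enum_rank x < enum_rank y)%N else 0)%R.
Proof.
have card_sep1 (z : V) (P : pred V) : #|[set w in [set z] | P w]| = P z.
  by rewrite -sum1dep_card big_mkcondr big_set1; case: (P z).
move=> xy; case: (eqVneq T [set y]) => [->|Ty].
  by rewrite bd_coef_setU1 ?inE // card_sep1.
case: (eqVneq T [set x]) => [->|Tx].
  by rewrite setUC bd_coef_setU1 ?inE 1?eq_sym // card_sep1.
rewrite /bd_coef; case: ifP => // /andP[Txy /eqP].
rewrite cardsDS // cards2 xy => T1.
have /cards1P[t Tt] : #|T| == 1 by lia.
have : t \in [set x; y] by rewrite (subsetP Txy) // Tt set11.
by case/set2P=> et; move: Tx Ty; rewrite Tt et eqxx.
Qed.

Definition edge_sign (x y : V) : K := ((-1) ^+ (enum_rank y < enum_rank x)%N)%R.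

Definition edge_chain (x y : V) (S : {set V}) : K :=
  if S == [set x; y] then edge_sign x y else 0%R.

Lemma bd_edge_chain (x y : V) (T : {set V}) : x != y ->
  bd (edge_chain x y) T = ((T == [set y])%:R - (T == [set x])%:R)%R.
Proof.
move=> xy; rewrite /bd (bigD1 [set x; y]) //= big1 => [|S /negbTE SE]; last first.
  by rewrite /edge_chain SE mul0r.
rewrite addr0 /edge_chain eqxx bd_coef_set2 // /edge_sign.
have rxy : (enum_rank x : nat) != enum_rank y.
  by apply: contra xy => /eqP/val_inj/enum_rank_inj ->.
case: (eqVneq T [set y]) => [->|Ty].
  rewrite -signr_addb addbb (_ : ([set y] == [set x]) = false) ?subr0 //.
  by apply: contraNF xy => /eqP/setP/(_ y); rewrite !inE eqxx eq_sym => <-.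
case: (eqVneq T [set x]) => [_|_]; last by rewrite mulr0 subrr.
rewrite -signr_addb sub0r.
by case: ltngtP rxy; rewrite ?expr1.
Qed.

Lemma bd_add (f g : {set V} -> K) (T : {set V}) :
  bd (fun S => f S + g S)%R T = (bd f T + bd g T)%R.
Proof. by rewrite /bd -big_split; apply: eq_bigr => S _; rewrite mulrDl. Qed.

Lemma bd_sum (I : Type) (r : seq I) (F : I -> {set V} -> K) (T : {set V}) :
  bd (fun S => \sum_(a <- r) F a S)%R T = (\sum_(a <- r) bd (F a) T)%R.
Proof. by rewrite /bd exchange_big; apply: eq_bigr => S _; rewrite mulr_suml. Qed.

Lemma cycle_H1_nonzero (D : {set {set V}}) (p : nat -> V) (n : nat) : 1 < n ->
  (forall a b, a <= n -> b <= n -> p a = p b -> a = b) ->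
  (forall a, a < n -> [set p a; p a.+1] \in D) -> [set p n; p 0] \in D ->
  (forall S, S \in D -> #|S| != 3) ->
  H1_nonzero K D.
Proof.
move=> n_gt1 p_inj p_step p_close no_triangle.
have p_neq a b : a <= n -> b <= n -> a != b -> p a != p b.
  by move=> an bn; apply: contra => /eqP/(p_inj _ _ an bn)->.
have step_neq a : a < n -> p a != p a.+1 by move=> an; apply: p_neq; lia.
have close_neq : p n != p 0 by apply: p_neq; lia.
pose z S := (\sum_(0 <= a < n) edge_chain (p a) (p a.+1) S + edge_chain (p n) (p 0) S)%R.
have edge_chain_out x y S : S != [set x; y] -> edge_chain x y S = 0%R.
  by rewrite /edge_chain => /negbTE ->.
exists z; split.
- move=> S nzS; suff /andP[SD /eqP S2] : (S \in D) && (#|S| == 2) by [].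
  apply: contraNT nzS => bad; apply/eqP.
  have bad_edge x y : [set x; y] \in D -> x != y -> S != [set x; y].
    by move=> xyD xy; apply: contraNneq bad => ->; rewrite xyD cards2 xy.
  rewrite /z big_nat_cond big1 ?add0r => [|a /andP[/andP[_ an] _]];
    by rewrite edge_chain_out // bad_edge ?p_step ?step_neq.
- move=> T; rewrite bd_add bd_sum bd_edge_chain //.
  rewrite big_nat_cond (eq_bigr (fun a => (T == [set p a.+1])%:R - (T == [set p a])%:R)%R);
    last by move=> a /andP[/andP[_ an] _]; rewrite bd_edge_chain ?step_neq.
  by rewrite -big_nat_cond telescope_sumr // addrC subrKA subrr.
- case=> c [c_chain c_bd].
  have c0 S : c S = 0%R.
    by apply/eqP/negPn/negP => /c_chain[SD S3]; move: (no_triangle _ SD); rewrite S3.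
  have /eqP : z [set p 0; p 1] = 0%R.
    by rewrite -c_bd /bd big1 // => S _; rewrite c0 mul0r.
  have small i : i <= n -> p i \in [set p 0; p 1] -> i <= 1.
    by move=> i_n /set2P[] /p_inj -> //; lia.
  have far a : 0 < a < n -> [set p 0; p 1] != [set p a; p a.+1].
    move=> /andP[a1 an]; apply/eqP => E.
    by have := small a.+1 an; rewrite E set22; lia.
  rewrite /z big_ltn; last lia.
  rewrite big_nat_cond big1 => [|a /andP[a_range _]]; last first.
    by rewrite edge_chain_out ?far.
  rewrite (edge_chain_out (p n)); last first.
    by apply/eqP => E; have := small n (leqnn n); rewrite E set21; lia.
  by rewrite /edge_chain eqxx !addr0 signr_eq0.
Qed.

Lemma hollow_triangle_H1 (D : {set {set V}}) (a b c : V) :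
  a != b -> b != c -> c != a ->
  [set a; b] \in D -> [set b; c] \in D -> [set c; a] \in D -> [set a; b; c] \notin D ->
  H1_nonzero K (induced D [set a; b; c]).
Proof.
move=> ab bc ca abD bcD caD abcD; pose p i := nth a [:: a; b; c] i.
have in_induced x y : [set x; y] \in D -> x \in [set a; b; c] -> y \in [set a; b; c] ->
    [set x; y] \in induced D [set a; b; c].
  by move=> xyD xU yU; rewrite inE xyD; apply/subsetP=> t /set2P[]->.
apply: (@cycle_H1_nonzero _ p 2) => //.
- have abc_uniq : uniq [:: a; b; c] by rewrite /= !inE negb_or ab bc eq_sym ca.
  by move=> i j i2 j2 /eqP; rewrite nth_uniq // => /eqP.
- by move=> [|[|i]] //= _; apply: in_induced; rewrite ?inE ?eqxx ?orbT.
- by apply: in_induced; rewrite ?inE ?eqxx ?orbT.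
- move=> S; rewrite inE => /andP[SD SU]; apply: contraNneq abcD => S3.
  suff <- : S = [set a; b; c] by [].
  apply/eqP; rewrite eqEcard SU S3 -setUA cardsU1 cards2.
  by case: (a \notin _); case: (b != c).
Qed.

End EdgeCycles.

Section Links.
Variables (V : finType) (G : {set {set V}}).

Lemma link_set0 : link G set0 = G.
Proof.
apply/setP=> X; apply/imsetP/idP => [[H] | XG].
  by rewrite inE setD0 => /andP[HG _] ->.
by exists X; rewrite ?inE ?XG ?sub0set ?setD0.
Qed.

Lemma setU_link (F T : {set V}) : T \in link G F -> F :|: T \in G.
Proof.
case/imsetP=> H; rewrite inE => /andP[HG FH] ->.
suff -> : F :|: (H :\: F) = H by [].
by apply/setP=> t; rewrite !inE; case: (boolP (t \in F)) => // /(subsetP FH).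
Qed.

Lemma link_setU (F T : {set V}) : [disjoint F & T] -> F :|: T \in G -> T \in link G F.
Proof.
move=> FT FTG; apply/imsetP; exists (F :|: T); first by rewrite inE FTG subsetUl.
by rewrite setDUl setDv set0U; apply/esym/setDidPl; rewrite disjoint_sym.
Qed.

End Links.

Section NonReturningPaths.
Variables (V : finType) (G : {set {set V}}).

Definition nr_path (f : nat -> V) (k : nat) : Prop :=
  (forall j, j < k -> f j != f j.+1 /\ [set f j; f j.+1] \in G) /\
  (forall j, j.+2 <= k -> f j != f j.+2 /\ [set f j; f j.+1; f j.+2] \notin G).

Lemma eq_nr_path (f g : nat -> V) (k : nat) :
  (forall i, i <= k -> f i = g i) -> nr_path f k -> nr_path g k.
Proof.
move=> fg [steps turns]; split=> j jk; rewrite -!fg; try lia.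
  exact: steps.
exact: turns.
Qed.

Lemma nr_path_le (f : nat -> V) (k k' : nat) : k' <= k -> nr_path f k -> nr_path f k'.
Proof. by move=> k'k [steps turns]; split=> j jk; [apply: steps | apply: turns]; lia. Qed.

Lemma nr_path_shift (f : nat -> V) (k a k' : nat) :
  a + k' <= k -> nr_path f k -> nr_path (fun i => f (a + i)) k'.
Proof.
move=> ak [steps turns]; split=> j jk; rewrite !addnS; [apply: steps | apply: turns]; lia.
Qed.

Lemma nr_path_rev (f : nat -> V) (k : nat) : nr_path f k -> nr_path (fun i => f (k - i)) k.
Proof.
move=> [steps turns]; split=> j jk.
- have /steps[? ?] : k - j.+1 < k by lia.
  by rewrite -(subnSK jk) eq_sym setUC.
- have /turns[? ?] : (k - j.+2).+2 <= k by lia.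
  have -> : k - j = (k - j.+2).+2 by lia.
  have -> : k - j.+1 = (k - j.+2).+1 by lia.
  split; first by rewrite eq_sym.
  by rewrite (_ : [set _; _; _] = [set f (k - j.+2); f (k - j.+2).+1; f (k - j.+2).+2]) //;
    apply/setP=> t; rewrite !inE; do 3 case: (t == _).
Qed.

Lemma nr_path_cat (f g : nat -> V) (k1 k2 : nat) :
  nr_path f k1.+1 -> nr_path g k2.+1 -> f k1.+1 = g 0 ->
  f k1 != g 1 -> [set f k1; f k1.+1; g 1] \notin G ->
  nr_path (fun i => if i <= k1.+1 then f i else g (i - k1.+1)) (k1.+1 + k2.+1).
Proof.
move=> [f_steps f_turns] [g_steps g_turns] fg turn_ne turn_notin.
set h := fun i => _.
have hf i : i <= k1.+1 -> h i = f i by rewrite /h => ->.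
have hg i : k1.+1 <= i -> h i = g (i - k1.+1).
  rewrite /h => i_ge; case: ifP => // i_le.
  have -> : i = k1.+1 by lia.
  by rewrite subnn.
split=> j jk.
- have [j_f|j_g] := leqP j.+1 k1.+1.
    by rewrite !hf; [apply: f_steps | lia..].
  rewrite !hg ?subSn; try lia; apply: g_steps; lia.
- have [j_f|j_f'] := leqP j.+2 k1.+1.
    by rewrite !hf; [apply: f_turns | lia | lia | lia].
  have [j_g|j_g'] := leqP k1.+1 j.
    rewrite !hg ?subSn; try lia; apply: g_turns; lia.
  have -> : j = k1 by lia.
  by rewrite (hf k1) ?leqnSn // (hf k1.+1) // (hg k1.+2) // subSn // subnn.
Qed.

Lemma nrwalkP (x0 : V) (k : nat) (w : k.+1.-tuple V) : nrwalk G w <-> nr_path (nth x0 w) k.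
Proof.
have tw j : j <= k -> tnth w (inord j) = nth x0 w j by move=> jk; rewrite (tnth_nth x0) inordK.
split.
- case/andP=> /forallP steps /forallP turns; split=> j jk.
    by have /andP := steps (Ordinal jk); rewrite /= !tw //; lia.
  have jk' : j < k by lia.
  by have /implyP/(_ jk)/andP := turns (Ordinal jk'); rewrite /= !tw //; lia.
- case=> steps turns; apply/andP; split; apply/forallP=> j; have jk := ltn_ord j.
    by rewrite !tw ?(ltnW jk) //; apply/andP/steps.
  by apply/implyP=> jk2; rewrite !tw; try lia; apply/andP/turns.
Qed.

Definition nrwalks (r : nat) (u v : V) : {set r.+1.-tuple V} :=
  [set w : r.+1.-tuple V | [&& nrwalk G w, tnth w ord0 == u & tnth w ord_max == v]].

Lemma nrwalksP (r : nat) (u v : V) (w : r.+1.-tuple V) :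
  w \in nrwalks r u v <-> [/\ nr_path (nth u w) r, nth u w 0 = u & nth u w r = v].
Proof.
rewrite inE !(tnth_nth u) /=.
by split=> [/and3P[/(nrwalkP u) ? /eqP ? /eqP ?] | [/(nrwalkP u) -> -> ->]]; rewrite ?eqxx.
Qed.

Lemma card_nrwalks1 (u v : V) : #|nrwalks 1 u v| <= 1.
Proof.
apply/card_le1_eqP => w1 w2 /nrwalksP[_ w10 w11] /nrwalksP[_ w20 w21].
by apply: eq_from_tnth => -[[|[|//]] i_lt]; rewrite !(tnth_nth u) /= ?w10 ?w20 ?w11 ?w21.
Qed.

Lemma card_nrwalks_penult (s : nat) (u v x : V) :
  #|[set w in nrwalks s.+1 u v | nth u w s == x]| <= #|nrwalks s u x|.
Proof.
pose drop_last (w : s.+2.-tuple V) : s.+1.-tuple V := [tuple nth u w i | i < s.+1].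
have nth_drop_last w i : i <= s -> nth u (drop_last w) i = nth u w i.
  by move=> i_s; have := nth_mktuple (fun j : 'I_s.+1 => nth u w j) u (Ordinal (i_s : i < s.+1)).
rewrite -(card_in_imset (f := drop_last)) => [|w1 w2].
  apply/subset_leq_card/subsetP=> _ /imsetP[w /setIdP[/nrwalksP[wP w0 _] /eqP wx] ->].
  apply/nrwalksP; split; rewrite ?nth_drop_last //.
  by apply: eq_nr_path (nr_path_le (leqnSn s) wP) => i i_s; rewrite nth_drop_last.
move=> /setIdP[/nrwalksP[_ _ w1v] _] /setIdP[/nrwalksP[_ _ w2v] _] w12.
apply: eq_from_tnth => i; rewrite !(tnth_nth u).
have [i_s|i_s] := leqP i s; first by rewrite -!nth_drop_last // w12.
by rewrite (_ : nat_of_ord i = s.+1) ?w1v ?w2v //; have := ltn_ord i; lia.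
Qed.

End NonReturningPaths.

Section Flag.
Variables (K : fieldType) (V : finType) (G : {set {set V}}).
Hypotheses (G_closed : is_simplicial_complex G) (G_gr : gr1_gt K G 3).

Lemma card_minimal_nonface (S : {set V}) : S \notin G ->
  (forall T : {set V}, T \proper S -> 1 < #|T| -> T \in G) -> #|S| <= 2.
Proof.
move=> S_notin sub_face; rewrite leqNgt; apply/negP => S_gt2.
have [a aS] : exists a, a \in S by apply/card_gt0P; lia.
have Sa : #|S :\ a| = #|S|.-1 by rewrite (cardsD1 a S) aS.
have [b bS] : exists b, b \in S :\ a by apply/card_gt0P; lia.
have Sab : #|S :\ a :\ b| = #|S|.-2 by move: Sa; rewrite (cardsD1 b (S :\ a)) bS; lia.
have [c cS] : exists c, c \in S :\ a :\ b by apply/card_gt0P; lia.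
move: bS cS; rewrite !inE => /andP[ba bS] /andP[cb /andP[ca cS]].
have [ab bc] : a != b /\ b != c by rewrite eq_sym ba eq_sym cb.
set U := [set a; b; c]; set F := S :\: U.
have U3 : #|U| = 3.
  by rewrite /U -setUA cardsU1 cards2 bc !inE negb_or ab eq_sym ca.
have US : U \subset S by apply/subsetP=> t; rewrite !inE => /orP[/orP[]|] /eqP->.
have F_U : [disjoint F & U] by rewrite /F disjoints_subset setDE subsetIr.
have edge x y : x \in U -> y \in U -> x != y -> [set x; y] \in link G F.
  move=> xU yU xy; have xyU : [set x; y] \subset U by apply/subsetP=> t /set2P[]->.
  have [z /setDP[zU z_xy]] : exists z, z \in U :\: [set x; y].
    by apply/card_gt0P; rewrite cardsDS // U3 cards2 xy.
  apply: link_setU; first exact: disjointWr F_U.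
  apply: sub_face; last by rewrite (leq_trans _ (subset_leq_card (subsetUr F _))) ?cards2 ?xy.
  apply/properP; split; first by rewrite subUset subsetDl (subset_trans xyU US).
  by exists z; rewrite ?(subsetP US) // in_setU in_setD zU (negbTE z_xy).
have [aU bU cU] : [/\ a \in U, b \in U & c \in U] by rewrite !inE !eqxx ?orbT.
have FG : F \in G := G_closed (setU_link (edge a b aU bU ab)) (subsetUl F _).
have U_notin : U \notin link G F.
  apply: contra S_notin => /setU_link /G_closed; apply.
  by apply/subsetP=> t tS; rewrite in_setU in_setD tS andbT orNb.
have := G_gr FG (hollow_triangle_H1 K ab bc ca (edge _ _ aU bU ab) (edge _ _ bU cU bc)
  (edge _ _ cU aU ca) U_notin).
by rewrite U3.
Qed.

Lemma flag_face (S : {set V}) : 1 < #|S| ->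
  {in S &, forall x y, x != y -> [set x; y] \in G} -> S \in G.
Proof.
have [n] := ubnP #|S|; elim: n S => // n IH S /ltnSE Sn S_gt1 S_pairs.
have [/eqP/cards2P[x [y [xy S_xy]]] | S_ne2] := eqVneq #|S| 2.
  by rewrite {1}S_xy; apply: S_pairs; rewrite // S_xy ?set21 ?set22.
apply/negPn/negP => /card_minimal_nonface S_le2; suff : #|S| <= 2 by lia.
apply: S_le2 => T /[dup] /proper_card TS /proper_sub T_sub T_gt1.
apply: IH T_gt1 _; first lia.
by move=> x y /(subsetP T_sub) xS /(subsetP T_sub) yS; apply: S_pairs.
Qed.

Lemma flag_triangle (a b c : V) : a != b ->
  [set a; b] \in G -> [set b; c] \in G -> [set a; c] \in G -> [set a; b; c] \in G.
Proof.
move=> ab abG bcG acG; apply: flag_face.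
  by apply: leq_trans (subset_leq_card (subsetUl _ [set c])); rewrite cards2 ab.
have in3 t : t \in [set a; b; c] -> [\/ t = a, t = b | t = c].
  by rewrite !inE => /orP[/orP[]|] /eqP->; [apply: Or31 | apply: Or32 | apply: Or33].
by move=> x y /in3[]-> /in3[]->; rewrite ?eqxx // => _; rewrite setUC.
Qed.

Lemma nr_path_nonadj (f : nat -> V) (k j : nat) : nr_path G f k -> j.+2 <= k ->
  [set f j; f j.+2] \notin G.
Proof.
move=> [steps turns] jk; have [_ /negP turn] := turns j jk.
have [step_ne e1] := steps j (ltnW jk); have [_ e2] := steps j.+1 jk.
by apply/negP=> e02; apply: turn; apply: flag_triangle.
Qed.

End Flag.

Lemma gr1_gt_le (K : fieldType) (V : finType) (G : {set {set V}}) (n m : nat) :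
  n <= m -> gr1_gt K G m -> gr1_gt K G n.
Proof. by move=> nm G_gr W F FG /(G_gr W F FG); apply: leq_ltn_trans. Qed.

Section InducedCycles.
Variables (K : fieldType) (V : finType) (G : {set {set V}}) (m : nat).
Hypotheses (G_closed : is_simplicial_complex G) (G_gr : gr1_gt K G m) (G0 : set0 \in G).

Lemma induced_cycle_long (p : nat -> V) (n : nat) : 2 < n ->
  (forall a b, a <= n -> b <= n -> p a = p b -> a = b) ->
  (forall a, a < n -> [set p a; p a.+1] \in G) -> [set p n; p 0] \in G ->
  (forall a b, a.+1 < b <= n -> [set p a; p b] \in G -> a = 0 /\ b = n) ->
  m < n.+1.
Proof.
move=> n_gt2 p_inj p_step p_close p_chord.
have adj i j : i <= n -> j <= n -> i != j -> [set p i; p j] \in G ->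
    j = i.+1 \/ i = j.+1 \/ (i = 0 /\ j = n) \/ (j = 0 /\ i = n).
  move=> i_n j_n; case: (ltngtP i j) => // [ij|ji] _ ijG.
    have [->|ji1] := eqVneq j i.+1; first by left.
    have /p_chord/(_ ijG) : i.+1 < j <= n by lia.
    lia.
  rewrite setUC in ijG; have [->|ij1] := eqVneq i j.+1; first by lia.
  have /p_chord/(_ ijG) : j.+1 < i <= n by lia.
  lia.
set W := [set p i | i : 'I_n.+1].
have pW i : i <= n -> p i \in W by move=> i_n; apply/imsetP; exists (Ordinal (i_n : i < n.+1)).
have W_le : #|W| <= n.+1 by rewrite -[n.+1]card_ord leq_imset_card.
apply: leq_trans W_le; apply: (G_gr G0); rewrite link_set0.
have edge_W i j : i <= n -> j <= n -> [set p i; p j] \in G -> [set p i; p j] \in induced G W.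
  by move=> i_n j_n ijG; rewrite inE ijG; apply/subsetP=> t /set2P[]->; apply: pW.
apply: (@cycle_H1_nonzero _ _ _ p n) => //; first lia.
- by move=> a a_n; apply: edge_W; [lia | lia | exact: p_step].
- exact: edge_W.
move=> S; rewrite inE => /andP[SG SW]; apply/eqP=> S3.
have [x xS] : exists x, x \in S by apply/card_gt0P; rewrite S3.
have /cards2P[y [z [yz Sx]]] : #|S :\ x| == 2 by move: S3; rewrite (cardsD1 x) xS; lia.
have [yS zS] : y \in S :\ x /\ z \in S :\ x by rewrite Sx set21 set22.
move: yS zS; rewrite !inE => /andP[yx yS] /andP[zx zS].
have idx t : t \in S -> exists2 i, i <= n & t = p i.
  by move=> /(subsetP SW) /imsetP[i _ ->]; exists i; rewrite -1?ltnS ?ltn_ord.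
have pair i j : p i \in S -> p j \in S -> [set p i; p j] \in G.
  by move=> iS jS; apply: G_closed SG _; apply/subsetP=> t /set2P[]->.
have [i i_n ex] := idx x xS; have [j j_n ey] := idx y yS; have [k k_n ez] := idx z zS.
subst x y z.
have neq a b : p a != p b -> a != b by apply: contra => /eqP->.
have := adj _ _ j_n i_n (neq _ _ yx) (pair _ _ yS xS).
have := adj _ _ j_n k_n (neq _ _ yz) (pair _ _ yS zS).
have := adj _ _ k_n i_n (neq _ _ zx) (pair _ _ zS xS).
move: (neq _ _ yx) (neq _ _ yz) (neq _ _ zx); lia.
Qed.

Lemma nr_path_vertex (f : nat -> V) (L i : nat) : nr_path G f L -> 0 < i <= L -> [set f i] \in G.
Proof.
move=> [steps _] /andP[i0 iL]; have [_] := steps i.-1 (ltac:(lia)); rewrite prednK //.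
by move/G_closed; apply; rewrite subsetUr.
Qed.

Lemma minimal_chord_long (f : nat -> V) (L x e : nat) : nr_path G f L ->
  x + e <= L -> 2 < e -> [set f x; f (x + e)] \in G -> f x != f (x + e) ->
  (forall a b, a.+1 < b <= L -> b - a < e -> [set f a; f b] \notin G) ->
  m < e.+1.
Proof.
move=> f_nr xe e_gt2 xeG end_neq no_chord; have [steps _] := f_nr.
pose p t := f (x + t).
have p_neq a b : a < b -> b <= e -> p a != p b.
  move=> ab be; rewrite /p; have [->|b_ne] := eqVneq b a.+1.
    have /steps[+ _] : x + a < L by lia.
    by rewrite addnS.
  have [/andP[/eqP-> /eqP->]|not_end] := boolP ((a == 0) && (b == e)); first by rewrite addn0.
  apply: contraNneq (no_chord (x + a) (x + b) _ _) => [fab||]; try lia.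
  by rewrite fab setUid (nr_path_vertex f_nr) //; lia.
have p_inj a b : a <= e -> b <= e -> p a = p b -> a = b.
  move=> ae be /eqP; case: (ltngtP a b) => // [ab|ba].
    by rewrite (negbTE (p_neq a b ab be)).
  by rewrite eq_sym (negbTE (p_neq b a ba ae)).
have p_step a : a < e -> [set p a; p a.+1] \in G.
  move=> ae; have /steps[_] : x + a < L by lia.
  by rewrite /p addnS.
have p_close : [set p e; p 0] \in G by rewrite /p addn0 setUC.
apply: induced_cycle_long e_gt2 p_inj p_step p_close _ => a b abe abG.
have [/andP[/eqP-> /eqP->] //|not_end] := boolP ((a == 0) && (b == e)).
by exfalso; move: abG; apply/negP; apply: no_chord; lia.
Qed.

Lemma closed_nr_path_long (f : nat -> V) (L : nat) :
  2 < m -> 0 < L -> f 0 = f L -> nr_path G f L -> m < L.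
Proof.
move=> m_gt2 L_gt0 f_closed f_nr; have [steps _] := f_nr.
have L_gt1 : 1 < L.
  case: (ltngtP L 1) => [|//|L1]; first lia.
  by case: (steps 0 L_gt0); rewrite f_closed L1 eqxx.
(* A repeated vertex also counts as a chord, since [set y; y] = [set y] is a face. *)
pose chord e := [exists x : 'I_L.+1, (x + e <= L) && ([set f x; f (x + e)] \in G)].
have chord_at a b : a <= b <= L -> [set f a; f b] \in G -> chord (b - a).
  move=> /andP[ab bL] abG; apply/existsP; exists (inord a).
  by rewrite inordK ?subnKC ?bL //; lia.
have chord_L : exists e, (1 < e) && chord e.
  exists L; rewrite L_gt1 -(subn0 L) chord_at ?leqnn // f_closed setUid.
  by apply: nr_path_vertex f_nr _; lia.
have [e /andP[e_gt1 /existsP[x /andP[xe xeG]]] e_min] := ex_minnP chord_L.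
have no_chord a b : a.+1 < b <= L -> b - a < e -> [set f a; f b] \notin G.
  move=> abL bae; apply/negP=> /(chord_at a b) abG.
  have /e_min : (1 < b - a) && chord (b - a) by rewrite abG //; lia.
  lia.
have e_gt2 : 2 < e.
  rewrite ltn_neqAle e_gt1 andbT; apply/eqP => e2; move: xe xeG; rewrite -e2 addn2 => xe.
  exact/negP/(nr_path_nonadj G_closed (gr1_gt_le m_gt2 G_gr) f_nr xe).
have end_neq : f x != f (x + e).
  apply/eqP=> fxe; have /steps[_] : x + e.-1 < L by lia.
  rewrite -addnS prednK ?(ltnW e_gt1) // -fxe setUC; apply/negP; apply: no_chord; lia.
have e_lt_L : e < L.
  have [//|eL] := ltnP e L.
  have [x0 eL'] : x = 0 :> nat /\ e = L by lia.
  by move: end_neq; rewrite x0 eL' add0n f_closed eqxx.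
exact: leq_trans (minimal_chord_long f_nr xe e_gt2 xeG end_neq no_chord) e_lt_L.
Qed.

End InducedCycles.

Section GirthBounds.
Variables (K : fieldType) (V : finType) (G : {set {set V}}) (m d : nat).
Hypotheses (G_closed : is_simplicial_complex G) (G_gr : gr1_gt K G m) (m_gt2 : 2 < m).
Hypotheses (G0 : set0 \in G) (G_dim : forall F, F \in G -> #|F| <= d).

Lemma nrwalk_last_neq (r : nat) (w1 w2 : r.+2.-tuple V) : 0 < r -> 2 * r < m ->
  nrwalk G w1 -> nrwalk G w2 ->
  tnth w1 ord0 = tnth w2 (inord 1) -> tnth w1 (inord 1) = tnth w2 ord0 ->
  tnth w1 ord_max != tnth w2 ord_max.
Proof.
case: r w1 w2 => // r w1 w2 _ rm; have x0 : V := tnth w1 ord0.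
move=> /(nrwalkP G x0) w1P /(nrwalkP G x0) w2P; rewrite !(tnth_nth x0) !inordK //= => w10 w11.
apply/eqP => w_last.
have [_ w2_turns] := w2P; have [w2_ne w2_notin] := w2_turns 0 isT.
have := nr_path_cat (nr_path_rev w1P) (nr_path_shift (a := 1) (k' := r.+1) (leqnn _) w2P).
rewrite /= subnn subSnn w10 w11 => /(_ erefl w2_ne w2_notin) closed_walk.
suff : m < r.+2 + r.+1 by lia.
apply: (closed_nr_path_long G_closed G_gr G0 m_gt2 _ _ closed_walk) => //=.
by rewrite subn0 ifN ?addKn ?add1n ?w_last //; lia.
Qed.

Lemma nrwalks_penult_adj (s : nat) (u v : V) (w1 w2 : s.+2.-tuple V) : 2 * s.+1 <= m ->
  w1 \in nrwalks G s.+1 u v -> w2 \in nrwalks G s.+1 u v ->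
  nth u w1 s != nth u w2 s -> [set nth u w1 s; nth u w2 s] \in G.
Proof.
move=> sm /nrwalksP[w1P w10 w1v] /nrwalksP[w2P w20 w2v] x12; apply/negPn/negP => x12_notin.
have turn_notin : [set nth u w1 s; v; nth u w2 s] \notin G.
  apply: contra x12_notin => /G_closed; apply.
  by apply/subsetP=> t /set2P[]->; rewrite !inE eqxx ?orbT.
have := nr_path_cat w1P (nr_path_rev w2P).
rewrite subn0 subSS subn0 w1v w2v => /(_ erefl x12 turn_notin) closed_walk.
suff : m < s.+1 + s.+1 by lia.
apply: (closed_nr_path_long G_closed G_gr G0 m_gt2 _ _ closed_walk) => //=.
by rewrite ifN ?addnK ?subnn ?w10 ?w20 //; lia.
Qed.

Lemma card_nrwalks_penults (s : nat) (u v : V) : 2 * s.+1 <= m ->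
  #|[set nth u w s | w : s.+2.-tuple V in nrwalks G s.+1 u v]| <= d - 1.
Proof.
move=> sm; set X := [set _ | _ in _].
have penult_v w : w \in nrwalks G s.+1 u v -> nth u w s != v /\ [set nth u w s; v] \in G.
  by case/nrwalksP=> -[steps _] _ wv; rewrite -wv; apply: steps.
have v_notin : v \notin X by apply/imsetP=> -[w /penult_v[+ _] vw]; rewrite -vw eqxx.
have [->|X0] := eqVneq X set0; first by rewrite cards0.
have : v |: X \in G.
  apply: (flag_face G_closed (gr1_gt_le m_gt2 G_gr)).
    by rewrite cardsU1 v_notin add1n ltnS card_gt0.
  move=> x y /setU1P[->|/imsetP[w1 w1A ->]] /setU1P[->|/imsetP[w2 w2A ->]]; rewrite ?eqxx // => xy.
  - by rewrite setUC; have [] := penult_v w2 w2A.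
  - by have [] := penult_v w1 w1A.
  - exact: nrwalks_penult_adj w1A w2A xy.
by move/G_dim; rewrite cardsU1 v_notin; lia.
Qed.

Lemma card_nrwalksS (s : nat) (u v : V) (b : nat) : 2 * s.+1 <= m ->
  (forall x, #|nrwalks G s u x| <= b) -> #|nrwalks G s.+1 u v| <= (d - 1) * b.
Proof.
move=> sm card_s; set X := [set nth u w s | w : s.+2.-tuple V in nrwalks G s.+1 u v].
have : #|nrwalks G s.+1 u v| <= \sum_(x in X) b.
  rewrite -sum1_card (partition_big (fun w : s.+2.-tuple V => nth u w s) (mem X));
    last by move=> w wA; apply: imset_f.
  apply: leq_sum => x _; rewrite sum1dep_card.
  exact: leq_trans (card_nrwalks_penult G s u v x) (card_s x).
rewrite sum_nat_const => /leq_trans; apply.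
by rewrite leq_mul2r card_nrwalks_penults ?orbT.
Qed.

Lemma card_nrwalks_le (s : nat) (u v : V) : 0 < s -> 2 * s <= m ->
  #|nrwalks G s u v| <= (d - 1) ^ s.-1.
Proof.
elim: s v => // -[_ v _ _|s IH v _ sm]; first exact: card_nrwalks1.
by rewrite expnS; apply: card_nrwalksS => // x; apply: IH => //; lia.
Qed.

End GirthBounds.

Unset Implicit Arguments. Set Strict Implicit.

Theorem mainTheorem7 (K : fieldType) (V : finType) (G : {set {set V}})
  (d r : nat) :
  (1 <= r)%N -> is_simplicial_complex G -> has_dim_minus1 G d ->
  (gr1_gt K G (2 * r) ->
     forall u v : V,
       (#|[set w : (r.+1).-tuple V |
            [&& nrwalk G w, tnth w ord0 == u & tnth w ord_max == v]]|
        <= (d - 1) ^ (r - 1))%N)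
  /\
  (gr1_gt K G (2 * r + 1) ->
     forall u v : V, u != v -> [set u; v] \in G ->
       forall w1 w2 : (r.+2).-tuple V,
         nrwalk G w1 -> nrwalk G w2 ->
         tnth w1 ord0 = u -> tnth w1 (inord 1) = v ->
         tnth w2 ord0 = v -> tnth w2 (inord 1) = u ->
         tnth w1 ord_max != tnth w2 ord_max).
Proof.
move=> r_gt0 G_closed [[F FG _] G_dim].
have G0 : set0 \in G by apply: G_closed FG (sub0set F).
split=> [G_gr u v | G_gr u v _ _ w1 w2 w1P w2P w10 w11 w20 w21].
- rewrite (subn1 r); have [r1|r_gt1] := eqVneq r 1; first by rewrite r1; exact: card_nrwalks1.
  by apply: (card_nrwalks_le G_closed G_gr _ G0 G_dim); lia.
- apply: (nrwalk_last_neq G_closed G_gr _ G0) w1P w2P _ _; try lia.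
    by rewrite w10 w21.
  by rewrite w11 w20.
Qed.
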